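(* Let $d\ge 3$. Each generator $a_i$ ($1\le i\le d$) has infinite order in $G_d$.
   Context: Let $d\ge 3$, $X=\{1,\dots,d\}$, $T$ the $d$-regular rooted tree with vertex set $X^*$. $\mathrm{Aut}(T)$ is the group of root-preserving automorphisms with product left-to-right: $(gh)(u)=h(g(u))$. Sections $g|_u$ are defined by $g(uv)=g(u)\,g|_u(v)$; we write $g=(g|_1,\dots,g|_d)\lambda_g$ with $\lambda_g\in S_d$ the action on the first level; $e$ is the identity; $\overline{j}\in\{1,\dots,d\}$ denotes $j$ mod $d$. $G_d=\langle a_1,\dots,a_d\rangle\le\mathrm{Aut}(T)$ where $a_i$ acts on the first level as $(i\ \overline{i+1})$, with $a_i|_i=a_i$, $a_i|_{\overline{i+1}}=a_{\overline{i+1}}$, and $a_i|_x=e$ otherwise. *)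

From mathcomp Require Import all_boot.
Set Implicit Arguments. Unset Strict Implicit. Unset Printing Implicit Defensive.

(* Alphabet X = {1,...,d}; vertices of T are words over X, i.e. seq nat whose
   letters all lie in [1, d]. *)
Definition is_letter (d x : nat) : bool := (1 <= x <= d).
Definition is_vertex (d : nat) (u : seq nat) : bool := all (is_letter d) u.

(* \overline{j} : j mod d taken in {1,...,d}; used here for i+1. *)
Definition nxt (d i : nat) : nat := if i == d then 1 else i.+1.

(* The generator a_i of G_d, as a map on words (vertices of T):
   a_i = (a_i|_1, ..., a_i|_d) (i  \overline{i+1}) with a_i|_i = a_i,
   a_i|_{\overline{i+1}} = a_{\overline{i+1}}, a_i|_x = e otherwise. *)
Fixpoint gen_a (d i : nat) (u : seq nat) : seq nat :=
  match u with
  | [::] => [::]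
  | x :: w =>
      if x == i then nxt d i :: gen_a d i w
      else if x == nxt d i then i :: gen_a d (nxt d i) w
      else x :: w
  end.

(* n-th power of a tree automorphism g (product g h = "g then h", so
   g^n(u) = g(g(...g(u))) ). *)
Definition aut_pow (g : seq nat -> seq nat) (n : nat) (u : seq nat) : seq nat :=
  iter n g u.

Definition is_identity_aut (d : nat) (g : seq nat -> seq nat) : Prop :=
  forall u, is_vertex d u -> g u = u.

(* Relabelling the letters cyclically conjugates a_i into a_(i+1), so it is
   enough to treat a_1. If g^n = e and a letter x has first-level orbit of
   length l under g, then l divides n and the section of g^l at x satisfies
   (g^l|_x)^(n/l) = e. Following such orbits, a_1 leads to a_1 a_2, then to
   the words a_1 ... a_m a_(m-1) ... a_2 for m = 3, ..., d, and the last one to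
   a_1 a_2 ... a_d. This word and a_2 a_1 a_d a_(d-1) ... a_3 lead to each other
   through orbits of length d - 1 >= 2, so the exponent would decrease forever. *)

From mathcomp Require Import all_boot zify.

Set Implicit Arguments. Unset Strict Implicit. Unset Printing Implicit Defensive.

Section Words.
Variable d : nat.

(* A word [:: k1; ...; kr] stands for the product a_k1 ... a_kr; [word_perm g]
   is its action on the first level and [word_section g x] its section at the
   letter x, again written as a word. *)
Definition gen_perm k x := if x == k then nxt d k else if x == nxt d k then k else x.

Definition gen_section k x : seq nat :=
  if x == k then [:: k] else if x == nxt d k then [:: nxt d k] else [::].

Fixpoint word_act (g : seq nat) u :=
  if g is k :: g' then word_act g' (gen_a d k u) else u.

Fixpoint word_perm (g : seq nat) x :=
  if g is k :: g' then word_perm g' (gen_perm k x) else x.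

Fixpoint word_section (g : seq nat) x : seq nat :=
  if g is k :: g' then gen_section k x ++ word_section g' (gen_perm k x) else [::].

Lemma word_act_cat g1 g2 u : word_act (g1 ++ g2) u = word_act g2 (word_act g1 u).
Proof. by elim: g1 u => //= k g IH u. Qed.

Lemma word_perm_cat g1 g2 x : word_perm (g1 ++ g2) x = word_perm g2 (word_perm g1 x).
Proof. by elim: g1 x => //= k g IH x. Qed.

Lemma word_section_cat g1 g2 x :
  word_section (g1 ++ g2) x = word_section g1 x ++ word_section g2 (word_perm g1 x).
Proof. by elim: g1 x => //= k g IH x; rewrite IH catA. Qed.

Lemma word_perm_cons k g x : word_perm (k :: g) x = word_perm g (gen_perm k x).
Proof. by []. Qed.

Lemma word_section_cons k g x :
  word_section (k :: g) x = gen_section k x ++ word_section g (gen_perm k x).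
Proof. by []. Qed.

Lemma gen_a_cons k x w :
  gen_a d k (x :: w) = gen_perm k x :: word_act (gen_section k x) w.
Proof.
by rewrite /= /gen_perm /gen_section; case: (x == k) => //; case: (x == nxt d k).
Qed.

Lemma word_act_cons g x w :
  word_act g (x :: w) = word_perm g x :: word_act (word_section g x) w.
Proof.
elim: g x w => [//|k g IH] x w.
by rewrite -[LHS]/(word_act g (gen_a d k (x :: w))) gen_a_cons IH word_act_cat.
Qed.

Lemma nxt_lt k : k < d -> nxt d k = k.+1.
Proof. by move=> lt_kd; rewrite /nxt ifF //; apply/eqP; lia. Qed.

Lemma gen_perm_self k : k < d -> gen_perm k k = k.+1 /\ gen_section k k = [:: k].
Proof. by move=> lt_kd; rewrite /gen_perm /gen_section eqxx nxt_lt. Qed.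

Lemma gen_perm_succ k :
  k < d -> gen_perm k k.+1 = k /\ gen_section k k.+1 = [:: k.+1].
Proof.
move=> lt_kd; have ne_k : k.+1 != k by rewrite neq_ltn ltnSn orbT.
by rewrite /gen_perm /gen_section nxt_lt // (negbTE ne_k) eqxx.
Qed.

Lemma gen_perm_fix k x : k < d -> x != k -> x != k.+1 ->
  gen_perm k x = x /\ gen_section k x = [::].
Proof.
by move=> lt_kd ne_k ne_k1; rewrite /gen_perm /gen_section nxt_lt // !ifN.
Qed.

Lemma gen_perm_last_self : gen_perm d d = 1 /\ gen_section d d = [:: d].
Proof. by rewrite /gen_perm /gen_section /nxt eqxx. Qed.

Lemma gen_perm_last_1 : 1 < d -> gen_perm d 1 = d /\ gen_section d 1 = [:: 1].
Proof.
by move=> gt1_d; rewrite /gen_perm /gen_section /nxt eqxx !ifF //; apply/eqP; lia.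
Qed.

Lemma gen_perm_last_fix x : x != d -> x != 1 ->
  gen_perm d x = x /\ gen_section d x = [::].
Proof. by move=> ne_d ne_1; rewrite /gen_perm /gen_section /nxt eqxx !ifN. Qed.

Lemma word_perm_iota_fix a m x : a + m <= d -> (x < a) || (a + m < x) ->
  word_perm (iota a m) x = x /\ word_section (iota a m) x = [::].
Proof.
elim: m a => [//|m IH] a le_d out /=.
have [-> ->] := @gen_perm_fix a x ltac:(lia) ltac:(apply/eqP; lia) ltac:(apply/eqP; lia).
by apply: IH; lia.
Qed.

Lemma word_perm_iota_head a m : 0 < m -> a + m <= d ->
  word_perm (iota a m) a = a + m /\ word_section (iota a m) a = iota a m.
Proof.
elim: m a => [//|m IH] a _ le_d /=.
have [-> ->] := @gen_perm_self a ltac:(lia).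
case: m IH le_d => [|m] IH le_d; first by rewrite addn1.
by have [-> ->] := IH a.+1 isT ltac:(lia); rewrite addSnnS.
Qed.

Lemma word_perm_iota_inner a m x : a + m <= d -> a < x <= a + m ->
  word_perm (iota a m) x = x.-1 /\ word_section (iota a m) x = [:: x].
Proof.
elim: m a => [|m IH] a le_d x_in /=; first by lia.
have [->|ne_x] := eqVneq x a.+1.
  have [-> ->] := @gen_perm_succ a ltac:(lia).
  by have [-> ->] := @word_perm_iota_fix a.+1 m a ltac:(lia) ltac:(lia).
have [-> ->] := @gen_perm_fix a x ltac:(lia) ltac:(apply/eqP; lia) ne_x.
by apply: IH; lia.
Qed.

Lemma rev_iotaS a m : rev (iota a m.+1) = a + m :: rev (iota a m).
Proof. by rewrite -addn1 iotaD rev_cat. Qed.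

Lemma rev_iotaS_last a m : rev (iota a m.+1) = rev (iota a.+1 m) ++ [:: a].
Proof. by rewrite /= rev_cons cats1. Qed.

Lemma word_perm_rev_iota_fix a m x : a + m <= d -> (x < a) || (a + m < x) ->
  word_perm (rev (iota a m)) x = x /\ word_section (rev (iota a m)) x = [::].
Proof.
elim: m => [//|m IH] le_d out; rewrite rev_iotaS /=.
have [-> ->] :=
  @gen_perm_fix (a + m) x ltac:(lia) ltac:(apply/eqP; lia) ltac:(apply/eqP; lia).
by apply: IH; lia.
Qed.

Lemma word_perm_rev_iota_inner a m x : a + m <= d -> a <= x < a + m ->
  word_perm (rev (iota a m)) x = x.+1 /\ word_section (rev (iota a m)) x = [:: x].
Proof.
elim: m => [|m IH] le_d x_in; first by lia.
rewrite rev_iotaS /=.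
have [->|ne_x] := eqVneq x (a + m).
  have [-> ->] := @gen_perm_self (a + m) ltac:(lia).
  by have [-> ->] := @word_perm_rev_iota_fix a m (a + m).+1 ltac:(lia) ltac:(lia).
have [-> ->] := @gen_perm_fix (a + m) x ltac:(lia) ne_x ltac:(apply/eqP; lia).
by apply: IH; lia.
Qed.

Lemma word_perm_rev_iota_top a m : 0 < m -> a + m <= d ->
  word_perm (rev (iota a m)) (a + m) = a /\
  word_section (rev (iota a m)) (a + m) = rev (iota a.+1 m).
Proof.
elim: m => [//|m IH] _ le_d; rewrite !rev_iotaS /= addnS.
have [-> ->] := @gen_perm_succ (a + m) ltac:(lia).
case: m IH le_d => [|m] IH le_d; first by rewrite !addn0.
by have [-> ->] := IH isT ltac:(lia); rewrite addSn.
Qed.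


Definition word_pow_id g n := forall u, is_vertex d u -> iter n (word_act g) u = u.

Definition word_infinite_order g := forall n, 0 < n -> ~ word_pow_id g n.

(* [pow_section g x t] is the section of g^t at x: the product of the sections
   of g along the first t points of the orbit of x. *)
Fixpoint pow_section g x t : seq nat :=
  if t is t'.+1 then pow_section g x t' ++ word_section g (iter t' (word_perm g) x)
  else [::].

Lemma pow_sectionS g x t :
  pow_section g x t.+1 = pow_section g x t ++ word_section g (iter t (word_perm g) x).
Proof. by []. Qed.

Lemma iter_word_act_cons g x w t :
  iter t (word_act g) (x :: w) = iter t (word_perm g) x :: word_act (pow_section g x t) w.
Proof. by elim: t => //= t ->; rewrite word_act_cons word_act_cat. Qed.

Lemma pow_sectionD g x a b :
  pow_section g x (a + b) = pow_section g x a ++ pow_section g (iter a (word_perm g) x) b.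
Proof.
elim: b => [|b IH]; first by rewrite addn0 cats0.
by rewrite addnS /= IH -catA addnC iterD.
Qed.

Lemma word_act_pow_section_mul g x l q w : iter l (word_perm g) x = x ->
  word_act (pow_section g x (q * l)) w = iter q (word_act (pow_section g x l)) w.
Proof.
move=> per_x; elim: q w => [//|q IH] w.
by rewrite mulSn pow_sectionD word_act_cat per_x IH iterSr.
Qed.

Lemma vertex_cons x w : is_letter d x -> is_vertex d w -> is_vertex d (x :: w).
Proof. by rewrite /is_vertex /= => -> ->. Qed.

Lemma word_pow_id_pow_section g x l n : is_letter d x -> 0 < l ->
  iter l (word_perm g) x = x -> (forall t, 0 < t < l -> iter t (word_perm g) x != x) ->
  word_pow_id g n -> l %| n /\ word_pow_id (pow_section g x l) (n %/ l).
Proof.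
move=> x_letter l_gt0 per_x min_l g_n.
have := g_n [:: x] (@vertex_cons x [::] x_letter isT).
rewrite iter_word_act_cons => -[fix_x _].
have mod0 : n %% l = 0.
  move: fix_x; rewrite {1}(divn_eq n l) addnC iterD iterM (iter_fix _ per_x) => fix_x.
  have [//|mod_gt0] := posnP (n %% l).
  by have := min_l (n %% l); rewrite mod_gt0 ltn_pmod // fix_x eqxx => /(_ isT).
have n_eq : n = n %/ l * l by rewrite {1}(divn_eq n l) mod0 addn0.
split; first by rewrite /dvdn mod0.
move=> u u_vertex; have := g_n (x :: u) (vertex_cons x_letter u_vertex).
by rewrite iter_word_act_cons => -[_]; rewrite -word_act_pow_section_mul // -n_eq.
Qed.

Lemma word_infinite_order_pow_section g x l : is_letter d x -> 0 < l ->
  iter l (word_perm g) x = x -> (forall t, 0 < t < l -> iter t (word_perm g) x != x) ->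
  word_infinite_order (pow_section g x l) -> word_infinite_order g.
Proof.
move=> x_letter l_gt0 per_x min_l sec_inf n n_gt0 g_n.
have [l_dvd sec_id] := word_pow_id_pow_section x_letter l_gt0 per_x min_l g_n.
by apply: (sec_inf (n %/ l)) => //; rewrite divn_gt0 // dvdn_leq.
Qed.

Section ThreeLetters.
Hypothesis d_ge3 : 3 <= d.

Definition up_word := iota 1 d.

Definition down_word := [:: 2; 1; d] ++ rev (iota 3 (d - 3)).

Definition peak_word m := iota 1 m ++ rev (iota 2 (m - 2)).

Lemma up_word_split : up_word = iota 1 d.-1 ++ [:: d].
Proof.
by rewrite /up_word -{1}(ltn_predK d_ge3) -[d.-1.+1]addn1 iotaD add1n (ltn_predK d_ge3).
Qed.

Lemma word_perm_up_2 : word_perm up_word 2 = d /\ word_section up_word 2 = [:: 2; 1].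
Proof.
rewrite up_word_split word_perm_cat word_section_cat.
have [-> ->] /= := @word_perm_iota_inner 1 d.-1 2 ltac:(lia) ltac:(lia).
by have [-> ->] /= := gen_perm_last_1 ltac:(lia).
Qed.

Lemma word_perm_up_ge3 y : 3 <= y <= d ->
  word_perm up_word y = y.-1 /\ word_section up_word y = [:: y].
Proof.
move=> y_in; rewrite up_word_split word_perm_cat word_section_cat.
have [-> ->] /= := @word_perm_iota_inner 1 d.-1 y ltac:(lia) ltac:(lia).
by have [-> ->] := @gen_perm_last_fix y.-1 ltac:(apply/eqP; lia) ltac:(apply/eqP; lia).
Qed.

Lemma up_orbit_2 t : 0 < t <= d - 1 ->
  iter t (word_perm up_word) 2 = d.+1 - t /\
  pow_section up_word 2 t = [:: 2; 1] ++ rev (iota (d.+2 - t) t.-1).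
Proof.
elim: t => [//|[|t] IH] t_in.
  by rewrite /=; have [-> ->] := word_perm_up_2; rewrite subn1.
rewrite iterS pow_sectionS; have [-> ->] := IH ltac:(lia).
have [-> ->] := @word_perm_up_ge3 (d.+1 - t.+1) ltac:(lia).
split; first by lia.
rewrite -catA (_ : d.+2 - t.+2 = d.+1 - t.+1); last by lia.
by rewrite (_ : d.+2 - t.+1 = (d.+1 - t.+1).+1) ?rev_iotaS_last; last by lia.
Qed.

Lemma word_perm_down_1 : word_perm down_word 1 = 2 /\ word_section down_word 1 = [:: 1].
Proof.
rewrite /down_word word_perm_cat word_section_cat !word_perm_cons !word_section_cons.
have [-> ->] := @gen_perm_fix 2 1 ltac:(lia) isT isT.
have [-> ->] := @gen_perm_self 1 ltac:(lia).
have [-> ->] /= := @gen_perm_last_fix 2 ltac:(apply/eqP; lia) isT.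
by have [-> ->] := @word_perm_rev_iota_fix 3 (d - 3) 2 ltac:(lia) ltac:(lia).
Qed.

Lemma word_perm_down_2 :
  word_perm down_word 2 = (if d == 3 then 1 else 4) /\
  word_section down_word 2 = [:: 2; 3].
Proof.
rewrite /down_word word_perm_cat word_section_cat !word_perm_cons !word_section_cons.
have [-> ->] := @gen_perm_self 2 ltac:(lia).
have [-> ->] := @gen_perm_fix 1 3 ltac:(lia) isT isT.
have [d_eq3|d_ne3] := eqVneq d 3.
  have [-> ->] : gen_perm d 3 = 1 /\ gen_section d 3 = [:: 3].
    by rewrite /gen_perm /gen_section d_eq3.
  by rewrite d_eq3.
have [-> ->] /= := @gen_perm_last_fix 3 ltac:(apply/eqP; lia) isT.
by have [-> ->] := @word_perm_rev_iota_inner 3 (d - 3) 3 ltac:(lia) ltac:(lia).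
Qed.

Lemma word_perm_down_ge4 y : 4 <= y <= d ->
  word_perm down_word y = (if y == d then 1 else y.+1) /\
  word_section down_word y = [:: y].
Proof.
move=> y_in.
rewrite /down_word word_perm_cat word_section_cat !word_perm_cons !word_section_cons.
have [-> ->] := @gen_perm_fix 2 y ltac:(lia) ltac:(apply/eqP; lia) ltac:(apply/eqP; lia).
have [-> ->] := @gen_perm_fix 1 y ltac:(lia) ltac:(apply/eqP; lia) ltac:(apply/eqP; lia).
have [<-|y_ne_d] := eqVneq d y.
  have [-> ->] /= := gen_perm_last_self.
  by have [-> ->] := @word_perm_rev_iota_fix 3 (d - 3) 1 ltac:(lia) ltac:(lia).
have [-> ->] /= := @gen_perm_last_fix y ltac:(by rewrite eq_sym) ltac:(apply/eqP; lia).
by have [-> ->] := @word_perm_rev_iota_inner 3 (d - 3) y ltac:(lia) ltac:(lia).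
Qed.

Lemma down_orbit_1 t : 2 <= t <= d - 1 ->
  iter t (word_perm down_word) 1 = (if t == d - 1 then 1 else t.+2) /\
  pow_section down_word 1 t = iota 1 t.+1.
Proof.
elim: t => [//|[//|[|t]] IH] t_in.
  rewrite -[iter 2 _ 1]/(word_perm down_word (word_perm down_word 1)).
  rewrite -[pow_section _ 1 2]/(word_section down_word 1 ++
                                word_section down_word (word_perm down_word 1)).
  have [-> ->] := word_perm_down_1; have [-> ->] := word_perm_down_2.
  by split=> //; case: eqP; case: eqP => //; lia.
rewrite iterS pow_sectionS; have [-> ->] := IH ltac:(lia).
rewrite ifF; last by apply/eqP; lia.
have [-> ->] := @word_perm_down_ge4 t.+4 ltac:(lia).
split; first by case: eqP; case: eqP => //; lia.
by rewrite -(addn1 t.+3) iotaD add1n addn1.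
Qed.

Lemma letter_1 : is_letter d 1.
Proof. by rewrite /is_letter; lia. Qed.

Lemma letter_2 : is_letter d 2.
Proof. by rewrite /is_letter; lia. Qed.

Lemma up_pow_section_2 : pow_section up_word 2 (d - 1) = down_word.
Proof.
have [_ ->] := @up_orbit_2 (d - 1) ltac:(lia).
have -> : d.+2 - (d - 1) = 3 by lia.
have -> : (d - 1).-1 = (d - 3).+1 by lia.
by rewrite rev_iotaS /down_word (_ : 3 + (d - 3) = d) //; lia.
Qed.

Lemma down_pow_section_1 : pow_section down_word 1 (d - 1) = up_word.
Proof.
have [_ ->] := @down_orbit_1 (d - 1) ltac:(lia).
by rewrite subn1 prednK //; lia.
Qed.

Lemma up_word_pow_id n : word_pow_id up_word n ->
  d - 1 %| n /\ word_pow_id down_word (n %/ (d - 1)).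
Proof.
rewrite -up_pow_section_2; apply: word_pow_id_pow_section letter_2 _ _ _.
- by lia.
- by rewrite (proj1 (up_orbit_2 _)); lia.
- by move=> t t_in; rewrite (proj1 (up_orbit_2 _)); [apply/eqP | ]; lia.
Qed.

Lemma down_word_pow_id n : word_pow_id down_word n ->
  d - 1 %| n /\ word_pow_id up_word (n %/ (d - 1)).
Proof.
rewrite -down_pow_section_1; apply: word_pow_id_pow_section letter_1 _ _ _.
- by lia.
- by rewrite (proj1 (down_orbit_1 _)) ?eqxx //; lia.
- move=> [//|[|t]] t_in.
    by rewrite -[iter 1 _ 1]/(word_perm down_word 1) (proj1 word_perm_down_1).
  by rewrite (proj1 (down_orbit_1 _)) ?ifF //; [apply/eqP | ]; lia.
Qed.

(* Each round up_word -> down_word -> up_word divides the exponent by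
   (d - 1)^2 > 1. *)
Lemma up_word_infinite_order : word_infinite_order up_word.
Proof.
have l_gt1 : 1 < d - 1 by lia.
move=> n; elim/ltn_ind: n => n IH n_gt0.
move=> /up_word_pow_id[dvd_n /down_word_pow_id[dvd_q up_q]].
have l_gt0 := ltnW l_gt1.
have q_gt0 : 0 < n %/ (d - 1) by rewrite divn_gt0 // dvdn_leq.
apply: (IH _ _ _ up_q); last by rewrite divn_gt0 // dvdn_leq.
exact: leq_ltn_trans (leq_div _ _) (ltn_Pdiv l_gt1 n_gt0).
Qed.

Lemma word_perm_peak_1 m : 2 <= m < d ->
  word_perm (peak_word m) 1 = m.+1 /\ word_section (peak_word m) 1 = iota 1 m.
Proof.
move=> m_in; rewrite /peak_word word_perm_cat word_section_cat.
have [-> ->] := @word_perm_iota_head 1 m ltac:(lia) ltac:(lia).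
have [-> ->] := @word_perm_rev_iota_fix 2 (m - 2) (1 + m) ltac:(lia) ltac:(lia).
by rewrite cats0 add1n.
Qed.

Lemma word_perm_peak_succ m : 2 <= m < d ->
  word_perm (peak_word m) m.+1 = 2 /\
  word_section (peak_word m) m.+1 = m.+1 :: rev (iota 3 (m - 2)).
Proof.
move=> m_in; rewrite /peak_word word_perm_cat word_section_cat.
have [-> ->] /= := @word_perm_iota_inner 1 m m.+1 ltac:(lia) ltac:(lia).
have [->|m_ne2] := eqVneq m 2; first by [].
have [] := @word_perm_rev_iota_top 2 (m - 2) ltac:(lia) ltac:(lia).
by rewrite subnKC; [move=> -> -> | case/andP: m_in].
Qed.

Lemma word_perm_peak_2 m : 2 <= m < d ->
  word_perm (peak_word m) 2 = 1 /\ word_section (peak_word m) 2 = [:: 2].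
Proof.
move=> m_in; rewrite /peak_word word_perm_cat word_section_cat.
have [-> ->] /= := @word_perm_iota_inner 1 m 2 ltac:(lia) ltac:(lia).
by have [-> ->] := @word_perm_rev_iota_fix 2 (m - 2) 1 ltac:(lia) ltac:(lia).
Qed.

Lemma word_perm_peak_last :
  word_perm (peak_word d) 1 = 1 /\ word_section (peak_word d) 1 = up_word.
Proof.
rewrite /peak_word -/up_word up_word_split -catA word_perm_cat word_section_cat.
have [-> ->] := @word_perm_iota_head 1 d.-1 ltac:(lia) ltac:(lia).
rewrite add1n (ltn_predK d_ge3) word_perm_cons word_section_cons.
have [-> ->] := gen_perm_last_self.
by have [-> ->] := @word_perm_rev_iota_fix 2 (d - 2) 1 ltac:(lia) ltac:(lia).
Qed.

Lemma peak_word_infinite_order_succ m : 2 <= m < d ->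
  word_infinite_order (peak_word m.+1) -> word_infinite_order (peak_word m).
Proof.
move=> m_in next_inf; have [p1 s1] := word_perm_peak_1 m_in.
have [p2 s2] := word_perm_peak_succ m_in; have [p3 s3] := word_perm_peak_2 m_in.
apply: (@word_infinite_order_pow_section _ 1 3) letter_1 isT _ _ _.
- by rewrite !iterS /= p1 p2 p3.
- by move=> [|[|[|t]]] //= _; rewrite p1 ?p2 //; apply/eqP; lia.
rewrite !pow_sectionS /= p1 p2 s1 s2 s3.
move: next_inf; rewrite /peak_word.
rewrite -(addn1 m) iotaD add1n addn1 (_ : m.+1 - 2 = (m - 2).+1); last by lia.
by rewrite rev_iotaS_last -!catA.
Qed.

Lemma peak_word_infinite_order m : 2 <= m <= d -> word_infinite_order (peak_word m).
Proof.
move=> m_in; have [k] := ubnPeq (d - m); elim: k m m_in => [|k IH] m m_in dm.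
  rewrite (_ : m = d); last by lia.
  have [per_1 sec_1] := word_perm_peak_last.
  apply: (@word_infinite_order_pow_section _ 1 1) letter_1 isT per_1 _ _; first by lia.
  by rewrite /= sec_1; exact: up_word_infinite_order.
apply: peak_word_infinite_order_succ; first by lia.
by apply: IH; lia.
Qed.

Lemma gen_1_infinite_order : word_infinite_order [:: 1].
Proof.
have [p1 _] := @gen_perm_self 1 ltac:(lia).
have [p2 s2] := @gen_perm_succ 1 ltac:(lia).
apply: (@word_infinite_order_pow_section _ 1 2) letter_1 isT _ _ _.
- by rewrite /= p1 p2.
- by move=> [|[|t]] //= _; rewrite p1.
by rewrite /= p1 s2; apply: (@peak_word_infinite_order 2); lia.
Qed.

End ThreeLetters.
End Words.

Lemma letter_nxt d x : is_letter d x -> is_letter d (nxt d x).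
Proof. by rewrite /is_letter /nxt => x_letter; case: eqP; lia. Qed.

Lemma eq_nxt d x y : is_letter d x -> is_letter d y -> (nxt d x == nxt d y) = (x == y).
Proof.
rewrite /is_letter /nxt => x_letter y_letter.
by case: (eqVneq x d) => ex; case: (eqVneq y d) => ey; apply/eqP/eqP; lia.
Qed.

Lemma vertex_gen_a d j u : is_letter d j -> is_vertex d u -> is_vertex d (gen_a d j u).
Proof.
elim: u j => [//|x w IH] j j_letter /andP[x_letter w_vertex] /=.
case: (x == j); first by rewrite /is_vertex /= letter_nxt //; exact: IH.
case: eqP => [_|_]; last by rewrite /is_vertex /= x_letter.
by rewrite /is_vertex /= j_letter; apply: IH; rewrite ?letter_nxt.
Qed.

Lemma vertex_map_nxt d u : is_vertex d u -> is_vertex d (map (nxt d) u).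
Proof.
by elim: u => //= x w IH /andP[x_letter /IH]; rewrite /is_vertex /= letter_nxt.
Qed.

Lemma map_nxt_inj d u v : is_vertex d u -> is_vertex d v ->
  map (nxt d) u = map (nxt d) v -> u = v.
Proof.
elim: u v => [|x u IH] [|y v] //= /andP[x_letter u_vertex] /andP[y_letter v_vertex].
case=> exy euv.
by move/eqP: exy; rewrite eq_nxt // => /eqP ->; rewrite (IH v).
Qed.

Lemma gen_a_nxt_map d j u : is_letter d j -> is_vertex d u ->
  gen_a d (nxt d j) (map (nxt d) u) = map (nxt d) (gen_a d j u).
Proof.
elim: u j => [//|x w IH] j j_letter /andP[x_letter w_vertex] /=.
rewrite eq_nxt // eq_nxt //; last exact: letter_nxt.
case: (x == j) => /=; first by rewrite IH.
by case: (x == nxt d j) => //=; rewrite IH // letter_nxt.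
Qed.

Lemma identity_aut_pow_gen_a_nxt d j n : is_letter d j ->
  is_identity_aut d (aut_pow (gen_a d (nxt d j)) n) ->
  is_identity_aut d (aut_pow (gen_a d j) n).
Proof.
move=> j_letter nxt_n u u_vertex.
have conj m : is_vertex d (iter m (gen_a d j) u) /\
    iter m (gen_a d (nxt d j)) (map (nxt d) u) = map (nxt d) (iter m (gen_a d j) u).
  elim: m => [//|m [vertex_m conj_m]].
  by rewrite !iterS conj_m gen_a_nxt_map // vertex_gen_a.
have [vertex_n conj_n] := conj n.
apply: (map_nxt_inj vertex_n u_vertex).
by rewrite -conj_n; exact: nxt_n (vertex_map_nxt u_vertex).
Qed.

Lemma identity_aut_pow_gen_a_1 d i n : 1 <= i <= d ->
  is_identity_aut d (aut_pow (gen_a d i) n) -> is_identity_aut d (aut_pow (gen_a d 1) n).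
Proof.
elim: i => [//|[//|i] IH] i_in ai_n.
apply: IH; first by lia.
apply: identity_aut_pow_gen_a_nxt; first by rewrite /is_letter; lia.
by rewrite /nxt ifF //; apply/eqP; lia.
Qed.

Theorem corollary3p7 (d i : nat) :
  3 <= d -> 1 <= i <= d ->
  forall n : nat, 0 < n -> ~ is_identity_aut d (aut_pow (gen_a d i) n).
Proof.
move=> d_ge3 i_in n n_gt0 /(identity_aut_pow_gen_a_1 i_in) a1_n.
apply: (gen_1_infinite_order d_ge3 n_gt0) => u u_vertex.
by rewrite -[RHS](a1_n u u_vertex); apply: eq_iter.
Qed.
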